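(* Let $\alpha=(\alpha_1,\dots,\alpha_t)$ be palindromic (i.e. $\alpha_i=\alpha_{t+1-i}$ for all $i$) with $t$ odd, let $F=\breve F(\alpha)$ with elements $x_1,\dots,x_n$ and shared elements $s_1,\dots,s_{t-1}$. Assume that $\chi_{s_i}-\chi_{s_{t-i}}$ is $0$-mesic under rowmotion for all $i\in[t-1]$. Then (1) $\chi_{x_k}-\chi_{x_{n-k+1}}$ is $0$-mesic for all $k\in[n]$, and (2) $\hat\chi_{x_k}+\hat\chi_{x_{n-k+1}}$ is $1$-mesic for all $k\in[n]$.
   Context: A fence $\breve F(\alpha_1,\dots,\alpha_t)$ ($t\ge2$, positive integers, $\alpha_1,\alpha_t\ge2$) is the poset on $\{x_1,\dots,x_n\}$, $n=\alpha_1+\dots+\alpha_t-1$, with $a_i=\alpha_1+\dots+\alpha_i$, $a_0=0$, whose cover relations are: for $1\le j\le n-1$ with $a_{i-1}\le j<a_i$, $x_j\lessdot x_{j+1}$ if $i$ odd and $x_j\gtrdot x_{j+1}$ if $i$ even. Shared elements: $s_i=x_{a_i}$. $\mathcal J(F)$ is the set of order ideals; rowmotion $\rho:\mathcal J(F)\to\mathcal J(F)$ sends $I$ to the order ideal generated by $\min(F\setminus I)$. $\hat\chi_q(I)=1$ if $q\in I$, else 0; $\chi_q(I)=1$ if $q\in\max(I)$, else 0. A statistic $f:\mathcal J(F)\to\mathbb R$ is $c$-mesic under rowmotion if its average over every $\rho$-orbit equals $c$. *)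

From mathcomp Require Import all_boot all_order all_algebra.

Import GRing.Theory Num.Theory.
Local Open Scope ring_scope.

(* A composition alpha = (alpha_1,...,alpha_t) is a seq nat (alpha_i = nth 0 alpha (i-1)). *)

Definition fence_data (alpha : seq nat) : Prop :=
  [/\ (2 <= size alpha)%N, all (fun a => 0 < a)%N alpha,
      (2 <= head 0 alpha)%N & (2 <= last 0 alpha)%N].

Definition fence_n (alpha : seq nat) : nat := (sumn alpha).-1.

Definition fa (alpha : seq nat) (i : nat) : nat := sumn (take i alpha).

(* Elements: x_k (1 <= k <= n) is the ordinal k-1 of 'I_(fence_n alpha). *)
Notation elt alpha := ('I_(fence_n alpha)).

(* For a label j with a_{i-1} <= j < a_i: i odd gives x_j <. x_{j+1}, i even x_j >. x_{j+1}. *)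
Definition upstep (alpha : seq nat) (j : nat) : bool :=
  [exists i : 'I_(size alpha).+1,
     [&& (0 < (i : nat))%N, (fa alpha (i.-1) <= j)%N, (j < fa alpha i)%N & odd i]].
Definition downstep (alpha : seq nat) (j : nat) : bool :=
  [exists i : 'I_(size alpha).+1,
     [&& (0 < (i : nat))%N, (fa alpha (i.-1) <= j)%N, (j < fa alpha i)%N & ~~ odd i]].

Definition lessdot (alpha : seq nat) : rel (elt alpha) :=
  fun y z =>
    (((z : nat) == y.+1) && upstep alpha y.+1) ||
    (((y : nat) == z.+1) && downstep alpha z.+1).

Definition fle (alpha : seq nat) (y z : elt alpha) : bool := connect (lessdot alpha) y z.

Definition is_ideal (alpha : seq nat) (I : {set elt alpha}) : bool :=
  [forall y, forall z, (fle alpha y z && (z \in I)) ==> (y \in I)].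

Definition minset_of (alpha : seq nat) (S : {set elt alpha}) : {set elt alpha} :=
  [set m in S | [forall z, ((z \in S) && fle alpha z m) ==> (z == m)]].
Definition maxset_of (alpha : seq nat) (S : {set elt alpha}) : {set elt alpha} :=
  [set m in S | [forall z, ((z \in S) && fle alpha m z) ==> (z == m)]].

Definition rowmotion (alpha : seq nat) (I : {set elt alpha}) : {set elt alpha} :=
  [set y | [exists m in minset_of alpha (~: I), fle alpha y m]].

(* chi_{x_k}(I) = 1 iff x_k in max(I); hatchi_{x_k}(I) = 1 iff x_k in I (k is the 1-based label) *)
Definition chi (alpha : seq nat) (k : nat) (I : {set elt alpha}) : rat :=
  ([exists m : elt alpha, ((m : nat).+1 == k) && (m \in maxset_of alpha I)] : nat)%:R.
Definition hatchi (alpha : seq nat) (k : nat) (I : {set elt alpha}) : rat :=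
  ([exists m : elt alpha, ((m : nat).+1 == k) && (m \in I)] : nat)%:R.

Definition mesic (alpha : seq nat) (f : {set elt alpha} -> rat) (c : rat) : Prop :=
  forall I : {set elt alpha}, is_ideal alpha I ->
    (\sum_(J <- fingraph.orbit (@rowmotion alpha) I) f J)
      / (size (fingraph.orbit (@rowmotion alpha) I))%:R = c.

(* Fix a rowmotion orbit and let H l (resp. C l) count the ideals of the orbit that
   contain (resp. have as a maximal element) the element with label l, adding a
   virtual bottom (label 0) lying in every ideal and a virtual top (label n + 1)
   lying in none.  Since rowmotion permutes the orbit and max (rho I) = min (F \ I),
   every element yields linear relations between C and H at neighbouring labels,
   which depend only on whether it lies inside an increasing or a decreasing chain
   or is a peak or a valley.  Inside chains they make H discretely harmonic; at
   peaks and valleys (the shared elements) they determine H from C.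
   As alpha is palindromic and t is odd, the fence is isomorphic to its reversal,
   so l |-> |orbit| - H (n + 1 - l) and l |-> C (n + 1 - l) satisfy the same
   relations, and the hypothesis says that the two C agree at the shared elements.
   The difference of the two H thus vanishes at the boundary and at the shared
   elements and is harmonic elsewhere, hence it vanishes (an energy argument):
   this is (2), and (1) then follows from the relations. *)

From mathcomp Require Import all_boot all_order all_algebra.
From mathcomp Require Import zify ring lra.
Import GRing.Theory Num.Theory.
Local Open Scope ring_scope.

Lemma zero_or_harmonic_eq0 (R : realDomainType) (g : nat -> R) (N : nat) :
  g 0%N = 0 -> g N.+1 = 0 ->
  (forall k, (0 < k <= N)%N -> g k = 0 \/ g k.-1 + g k.+1 = g k *+ 2) ->
  forall k, (k <= N.+1)%N -> g k = 0.
Proof.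
move=> g0 gN gk.
pose D k := g k.+1 - g k.
(* discrete energy identity: the interior terms telescope because g k (D k - D k.-1) = 0 *)
have energy m : (0 < m <= N.+1)%N -> \sum_(k < m) D k ^+ 2 = g m * D m.-1.
  elim: m => [//|[|m] IH] hm; first by rewrite big_ord1 /D g0 subr0 expr2.
  rewrite big_ord_recr /= IH; last by lia.
  rewrite /D /=; have [->|harm] := gk m.+1 (ltac:(lia)); first by ring.
  have -> : g m.+2 = g m.+1 *+ 2 - g m by rewrite -harm /=; ring.
  by ring.
have D0 k : (k < N.+1)%N -> D k = 0.
  move=> hk; have /eqP := energy N.+1 (ltac:(lia)); rewrite gN mul0r.
  move=> /eqP/psumr_eq0P/(_ (Ordinal hk) isT)-/(_ (fun i _ => sqr_ge0 _)).
  by move/eqP; rewrite sqrf_eq0 => /eqP.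
elim=> // k IH hk; have := D0 k hk; rewrite /D IH ?subr0 //; lia.
Qed.

Section FenceRelations.

Context {R : zmodType}.

(* Relations at the element with label l among counts over [total] ideals: [u0] and
   [u1] say whether the edges from label l - 1 to l and from l to l + 1 go up,
   [h0], [h1], [h2] count the ideals containing labels l - 1, l, l + 1, and [c], [c']
   count those in which, resp. in whose rowmotion image, the element is maximal. *)
Definition local_relations (u0 u1 : bool) (h0 h1 h2 c c' total : R) : Prop :=
  match u0, u1 with
  | true, true => c = h1 - h2 /\ c' = h0 - h1
  | false, false => c = h1 - h0 /\ c' = h2 - h1
  | true, false => c = h1
  | false, true => c' = total - h1
  end.

Lemma local_relations_sum (T : eqType) (s : seq T) (u0 u1 : bool)
    (h0 h1 h2 c c' total : T -> R) :
  (forall x, x \in s -> local_relations u0 u1 (h0 x) (h1 x) (h2 x) (c x) (c' x) (total x)) ->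
  local_relations u0 u1 (\sum_(x <- s) h0 x) (\sum_(x <- s) h1 x) (\sum_(x <- s) h2 x)
    (\sum_(x <- s) c x) (\sum_(x <- s) c' x) (\sum_(x <- s) total x).
Proof.
rewrite /local_relations; case: u0; case: u1 => hs.
- by split; rewrite -sumrB; apply: eq_big_seq => x /hs[].
- by apply: eq_big_seq.
- by rewrite -sumrB; apply: eq_big_seq.
- by split; rewrite -sumrB; apply: eq_big_seq => x /hs[].
Qed.

Definition fence_relations (n : nat) (u : nat -> bool) (H C : nat -> R) (L : R) : Prop :=
  [/\ H 0%N = L, H n.+1 = 0 &
      forall m, (m < n)%N ->
        local_relations (u m) (u m.+1) (H m) (H m.+1) (H m.+2) (C m.+1) (C m.+1) L].

End FenceRelations.

Lemma local_relations_bits {R : pzRingType} (u0 u1 b0 b1 b2 : bool) :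
  (b1 -> (u0 ==> b0) && (u1 || b2)) -> (~~ b1 -> (u1 ==> ~~ b2) && (u0 || ~~ b0)) ->
  local_relations u0 u1 (b0%:R : R) b1%:R b2%:R
    (b1 && ((u1 ==> ~~ b2) && (u0 || ~~ b0)))%:R
    (~~ b1 && ((u0 ==> b0) && (u1 || b2)))%:R 1.
Proof.
rewrite /local_relations.
by case: u0 u1 b0 b1 b2 => [] [] [] [] [] //= h1 h2; rewrite ?subrr ?subr0 ?sub0r //;
  first [case: (h1 isT) | case: (h2 isT)].
Qed.

Section FenceRelationsTheory.

Context {R : realDomainType} {n : nat} {u : nat -> bool}.

Lemma fence_relations_mirror {H C : nat -> R} {L : R} :
  (forall j, (j <= n)%N -> u (n - j) = u j) -> fence_relations n u H C L ->
  fence_relations n u (fun l => L - H (n.+1 - l)%N) (fun l => C (n.+1 - l)%N) L.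
Proof.
move=> u_mirror [H0 Htop loc]; split; rewrite ?subn0 ?subnn ?Htop ?H0 ?subr0 ?subrr //.
move=> m hm; set m' := (n - m.+1)%N.
have [-> -> ->] : [/\ (n.+1 - m = m'.+2)%N, (n.+1 - m.+1 = m'.+1)%N & (n.+1 - m.+2 = m')%N].
  by rewrite /m'; split; lia.
have := loc m' (ltac:(rewrite /m'; lia)).
have um' : u m' = u m.+1 by rewrite /m' u_mirror.
have um'S : u m'.+1 = u m by rewrite -(u_mirror m) 1?ltnW //; congr u; rewrite /m'; lia.
rewrite um' um'S /local_relations.
by case: (u m); case: (u m.+1) => /= h; do ?split; lra.
Qed.

Lemma fence_relations_unique {H1 C1 H2 C2 : nat -> R} {L : R} :
  fence_relations n u H1 C1 L -> fence_relations n u H2 C2 L ->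
  (forall m, (m < n)%N -> u m != u m.+1 -> C1 m.+1 = C2 m.+1) ->
  (forall l, (l <= n.+1)%N -> H1 l = H2 l) /\ (forall m, (m < n)%N -> C1 m.+1 = C2 m.+1).
Proof.
move=> [H10 H1top loc1] [H20 H2top loc2] shared.
have eqH l : (l <= n.+1)%N -> H1 l = H2 l.
  move=> hl; apply/eqP; rewrite -subr_eq0; apply/eqP; move: l hl.
  apply: (@zero_or_harmonic_eq0 _ (fun l => H1 l - H2 l));
    rewrite ?H10 ?H20 ?H1top ?H2top ?subrr //.
  case=> // m /andP[_ hm]; have := shared m hm; have := loc1 m hm; have := loc2 m hm.
  rewrite /local_relations mulr2n /=.
  by case: (u m); case: (u m.+1) => h2 h1 sh;
    [right | left; have e := sh isT | left; have e := sh isT | right]; lra.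
split=> // m hm; have := shared m hm; have := loc1 m hm; have := loc2 m hm.
rewrite /local_relations !eqH; try lia.
by case: (u m); case: (u m.+1) => h2 h1 sh; [lra | exact: sh | exact: sh | lra].
Qed.

Lemma fence_relations_symmetric {H C : nat -> R} {L : R} :
  (forall j, (j <= n)%N -> u (n - j) = u j) -> fence_relations n u H C L ->
  (forall m, (m < n)%N -> u m != u m.+1 -> C m.+1 = C (n - m)%N) ->
  forall m, (m < n)%N -> H m.+1 + H (n - m)%N = L /\ C m.+1 = C (n - m)%N.
Proof.
move=> u_mirror rel shared.
have [eqH eqC] := fence_relations_unique rel (fence_relations_mirror u_mirror rel) shared.
move=> m hm; rewrite eqH ?eqC ?subSS ?subrK //; exact: ltnW.
Qed.

End FenceRelationsTheory.

Lemma rev_palindrome {T : Type} {x0 : T} {s : seq T} :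
  (forall i, (i < size s)%N -> nth x0 s i = nth x0 s (size s - 1 - i)) -> rev s = s.
Proof.
move=> pal; apply: (@eq_from_nth _ x0); rewrite ?size_rev // => i hi.
rewrite nth_rev // (pal i hi); congr (nth _ _ _); lia.
Qed.

Section FenceSegments.

Variable alpha : seq nat.

Local Notation n := (fence_n alpha).
Local Notation t := (size alpha).

Definition in_segment (i j : nat) : bool :=
  [&& (0 < i)%N, (fa alpha i.-1 <= j)%N & (j < fa alpha i)%N].

Lemma leq_fa i j : (i <= j)%N -> (fa alpha i <= fa alpha j)%N.
Proof. by move=> /subnKC <-; rewrite /fa takeD sumn_cat leq_addr. Qed.

Lemma fa_size : fa alpha (size alpha) = sumn alpha.
Proof. by rewrite /fa take_size. Qed.

Lemma in_segment_unique {i i' j : nat} : in_segment i j -> in_segment i' j -> i = i'.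
Proof.
move=> /and3P[i0 lo hi] /and3P[i0' lo' hi'].
case: (ltngtP i i') => // [lt|gt].
- by have := @leq_fa i i'.-1 (ltac:(lia)); lia.
- by have := @leq_fa i' i.-1 (ltac:(lia)); lia.
Qed.

Lemma in_segment_exists j : (j < sumn alpha)%N ->
  exists2 i, (i <= size alpha)%N & in_segment i j.
Proof.
move=> hj; have ex : exists i, (j < fa alpha i)%N by exists (size alpha); rewrite fa_size.
case: (ex_minnP ex) => i hi imin; exists i; first by apply: imin; rewrite fa_size.
have i0 : (0 < i)%N by case: i hi {imin} => //; rewrite /fa take0.
by rewrite /in_segment i0 hi leqNgt andbT; apply/negP => /imin; lia.
Qed.

Lemma exists_segmentE (P : pred nat) {i j : nat} : (i <= size alpha)%N -> in_segment i j ->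
  [exists i' : 'I_(size alpha).+1,
     [&& (0 < (i' : nat))%N, (fa alpha i'.-1 <= j)%N, (j < fa alpha i')%N & P i']] = P i.
Proof.
move=> isz seg; apply/existsP/idP => [[i' /and4P[i0 lo hi Pi']]|Pi].
  by rewrite (in_segment_unique seg (_ : in_segment i' j)) // /in_segment i0 lo hi.
have ilt : (i < (size alpha).+1)%N by [].
by exists (Ordinal ilt); move: seg => /and3P[-> -> ->].
Qed.

Lemma upstep_segment {i j : nat} : (i <= size alpha)%N -> in_segment i j -> upstep alpha j = odd i.
Proof. exact: exists_segmentE. Qed.

Lemma downstepE j : (j < sumn alpha)%N -> downstep alpha j = ~~ upstep alpha j.
Proof.
move=> /in_segment_exists[i isz seg].
by rewrite (upstep_segment isz seg) /downstep (exists_segmentE (fun i => ~~ odd i) isz seg).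
Qed.

Lemma lessdotE (y z : elt alpha) :
  lessdot alpha y z =
  ((z == y.+1 :> nat) && upstep alpha y.+1) || ((y == z.+1 :> nat) && ~~ upstep alpha z.+1).
Proof. by rewrite /lessdot downstepE //; have := ltn_ord z; rewrite /fence_n; lia. Qed.

Lemma fle_upstep (y z : elt alpha) : fle alpha y z -> forall j,
  ((y <= j < z)%N -> upstep alpha j.+1) /\ ((z <= j < y)%N -> ~~ upstep alpha j.+1).
Proof.
move=> /connectP[p yp ->] j; elim: p y yp => [|w p IH] y /=; first by split; lia.
move=> /andP[yw /IH[IH1 IH2]] {IH}; move: IH1 IH2 yw; case: (last w p) => /= l _ IH1 IH2.
rewrite lessdotE => /orP[/andP[/eqP ew up]|/andP[/eqP ey dn]]; split=> hj.
- by case: (j =P y) => [->//|ne]; apply: IH1; move: ew hj ne; clear; lia.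
- by apply: IH2; move: ew hj; clear; lia.
- by apply: IH1; move: ey hj; clear; lia.
- by case: (j =P w) => [->//|ne]; apply: IH2; move: ey hj ne; clear; lia.
Qed.

Lemma fle_antisym (y z : elt alpha) : fle alpha y z -> fle alpha z y -> y = z.
Proof.
move=> /fle_upstep yz /fle_upstep zy; apply/val_inj/eqP.
case: (ltngtP y z) => // lt.
- have hy : (y <= y < z)%N by rewrite leqnn lt.
  by have := (zy y).2 hy; rewrite (yz y).1.
- have hz : (z <= z < y)%N by rewrite leqnn lt.
  by have := (yz z).2 hz; rewrite (zy z).1.
Qed.

Lemma upstep0 : (0 < head 0%N alpha)%N -> upstep alpha 0.
Proof.
move=> head_gt0; have fa1 : fa alpha 1 = head 0%N alpha.
  by rewrite /fa; case: (alpha) => //= a s; rewrite take0 addn0.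
have t_gt0 : (1 <= t)%N by case: (alpha) head_gt0.
by rewrite (@upstep_segment 1 0) // /in_segment fa1 head_gt0 /fa take0.
Qed.

Lemma shared_fa m : (m < n)%N -> upstep alpha m != upstep alpha m.+1 ->
  exists2 i, (1 <= i <= t - 1)%N & fa alpha i = m.+1.
Proof.
rewrite /fence_n => hm; have [i it seg] := @in_segment_exists m (ltac:(lia)).
rewrite (upstep_segment it seg) => neq.
move: seg => /and3P[i0 lo hi]; have [lt|ge] := ltnP m.+1 (fa alpha i).
  have seg' : in_segment i m.+1 by rewrite /in_segment i0 lt leqW.
  by move: neq; rewrite (upstep_segment it seg') eqxx.
have i_lt : (i < t)%N.
  by rewrite ltn_neqAle it andbT; apply/eqP => ei; move: ge; rewrite ei fa_size; lia.
by exists i; lia.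
Qed.

End FenceSegments.

Section PalindromicFence.

Context {alpha : seq nat}.
Hypothesis alpha_rev : rev alpha = alpha.

Local Notation n := (fence_n alpha).
Local Notation t := (size alpha).

Lemma fa_rev {i : nat} : (i <= t)%N -> (fa alpha (t - i) + fa alpha i = sumn alpha)%N.
Proof.
move=> hi; have hd : drop (t - i) alpha = rev (take i alpha).
  by rewrite -[X in drop _ X]alpha_rev drop_rev subKn.
by rewrite /fa -[RHS](congr1 sumn (cat_take_drop (t - i) alpha)) sumn_cat hd sumn_rev.
Qed.

Hypotheses (t_odd : odd t) (sumn_gt0 : (0 < sumn alpha)%N).

Lemma upstep_mirror j : (j <= n)%N -> upstep alpha (n - j) = upstep alpha j.
Proof.
rewrite /fence_n => hj; have [i it seg] := @in_segment_exists alpha j (ltac:(lia)).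
have i0 : (0 < i)%N by case/and3P: seg.
have seg' : in_segment alpha (t - i).+1 ((sumn alpha).-1 - j).
  have := fa_rev it; have := @fa_rev i.-1 (ltac:(lia)); move: seg.
  rewrite /in_segment /= (_ : (t - i.-1 = (t - i).+1)%N); last by lia.
  by move=> /and3P[_ lo hi] e1 e2; lia.
rewrite (upstep_segment alpha it seg) (upstep_segment alpha _ seg'); last by lia.
by rewrite oddS oddB // t_odd; case: (odd i).
Qed.

End PalindromicFence.

Lemma map_traject (T : Type) (f : T -> T) x n :
  map f (traject f x n) = traject f (f x) n.
Proof. by elim: n x => //= n IH x; rewrite IH. Qed.

Lemma sum_orbit_shift {T : finType} {f : T -> T} {S : {pred T}} {V : nmodType}
    (F : T -> V) {x : T} :
  {homo f : y / y \in S} -> {in S &, injective f} -> x \in S ->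
  \sum_(y <- fingraph.orbit f x) F (f y) = \sum_(y <- fingraph.orbit f x) F y.
Proof.
move=> fS finj xS; have := iter_order_in fS finj xS; rewrite /fingraph.orbit.
case: (order f x) (order_gt0 f x) => // k _ fkx.
rewrite -(big_map f predT F) map_traject trajectSr -iterSr fkx big_rcons.
by rewrite trajectS big_cons addrC.
Qed.

Section Rowmotion.

Context {alpha : seq nat}.

Implicit Types (I S : {set elt alpha}) (m x y z : elt alpha).

Lemma idealP {I y z} : is_ideal alpha I -> fle alpha y z -> z \in I -> y \in I.
Proof. by move=> /forallP/(_ y)/forallP/(_ z) /implyP yzI yz zI; apply: yzI; rewrite yz. Qed.

Lemma fle_refl x : fle alpha x x.
Proof. exact: connect0. Qed.

Lemma fle_trans {x y z} : fle alpha x y -> fle alpha y z -> fle alpha x z.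
Proof. exact: connect_trans. Qed.

Lemma lessdot_fle {x y} : lessdot alpha x y -> fle alpha x y.
Proof. exact: connect1. Qed.

Lemma lessdot_irr y : lessdot alpha y y = false.
Proof. by rewrite /lessdot ltn_eqF. Qed.

Lemma maxset_ideal I m : is_ideal alpha I ->
  (m \in maxset_of alpha I) = (m \in I) && [forall w, lessdot alpha m w ==> (w \notin I)].
Proof.
move=> hI; rewrite inE; congr (_ && _); apply/forallP/forallP => h w; apply/implyP.
- move=> mw; apply/negP => wI; have /implyP := h w; rewrite wI lessdot_fle // => /(_ isT)/eqP wm.
  by move: mw; rewrite wm lessdot_irr.
- move=> /andP[wI /connectP[[_ ->//|v p /= /andP[mv vp] ew]]].
  have vI : v \in I by apply: idealP hI _ wI; rewrite ew; apply/connectP; exists p.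
  by have := h v; rewrite mv vI.
Qed.

Lemma minset_ideal_compl I m : is_ideal alpha I ->
  (m \in minset_of alpha (~: I)) = (m \notin I) && [forall w, lessdot alpha w m ==> (w \in I)].
Proof.
move=> hI; rewrite !inE; congr (_ && _); apply/forallP/forallP => h w; apply/implyP.
- move=> wm; apply/negPn/negP => wI; have /implyP := h w; rewrite inE wI lessdot_fle //.
  by move=> /(_ isT)/eqP ewm; move: wm; rewrite ewm lessdot_irr.
- rewrite inE => /andP[wI /connectP[p]]; case/lastP: p => [_ ->//|p v].
  rewrite rcons_path last_rcons => /andP[wp lv] ev.
  have /implyP := h (last w p); rewrite ev lv => /(_ isT) lI.
  by move: wI; rewrite (idealP hI _ lI) //; apply/connectP; exists p.
Qed.

Lemma rowmotion_ideal I : is_ideal alpha (rowmotion alpha I).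
Proof.
apply/forallP => y; apply/forallP => z; apply/implyP => /andP[yz].
rewrite !inE => /existsP[m /andP[mmin zm]]; apply/existsP; exists m.
by rewrite mmin; apply: fle_trans yz zm.
Qed.

Lemma maxset_rowmotion I : maxset_of alpha (rowmotion alpha I) = minset_of alpha (~: I).
Proof.
apply/setP => m; apply/idP/idP.
- rewrite inE => /andP[]; rewrite inE => /existsP[m' /andP[m'min mm']] /forallP/(_ m').
  have m'R : m' \in rowmotion alpha I.
    by rewrite inE; apply/existsP; exists m'; rewrite m'min fle_refl.
  by rewrite m'R mm' => /eqP <-.
- move=> mmin; rewrite inE; apply/andP; split.
    by rewrite inE; apply/existsP; exists m; rewrite mmin fle_refl.
  apply/forallP => z; apply/implyP; rewrite inE => /andP[/existsP[m' /andP[m'min zm']] mz].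
  have mm' : m = m'.
    move: m'min; rewrite inE => /andP[_ /forallP/(_ m)].
    by move: mmin; rewrite inE => /andP[-> _]; rewrite (fle_trans mz zm') => /eqP.
  by apply/eqP/fle_antisym; rewrite // mm'.
Qed.

Lemma exists_minset S x : x \in S -> exists2 m, m \in minset_of alpha S & fle alpha m x.
Proof.
move=> xS; have xA : x \in [pred m | (m \in S) && fle alpha m x] by rewrite inE xS fle_refl.
(* an element below x with the smallest down-set is minimal *)
case: (arg_minnP (fun m => #|[set w | fle alpha w m]|) xA) => m /andP[mS mx] mmin.
exists m => //; rewrite inE mS; apply/forallP => z; apply/implyP => /andP[zS zm].
have down_sub : [set w | fle alpha w z] \subset [set w | fle alpha w m].
  by apply/subsetP => w; rewrite !inE => wz; apply: fle_trans wz zm.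
have /eqP/setP/(_ m) : [set w | fle alpha w z] == [set w | fle alpha w m].
  by rewrite eqEcard down_sub mmin //; apply/andP; split; last exact: fle_trans zm mx.
by rewrite !inE fle_refl => mz; apply/eqP/fle_antisym.
Qed.

Lemma notin_idealE I x : is_ideal alpha I ->
  (x \notin I) = [exists m in minset_of alpha (~: I), fle alpha m x].
Proof.
move=> hI; apply/idP/existsP => [xI|[m /andP[mmin mx]]].
  have [|m mmin mx] := @exists_minset (~: I) x; first by rewrite inE.
  by exists m; rewrite mmin.
apply/negP => xI; move: mmin; rewrite !inE => /andP[/negP mI _].
exact/mI/(idealP hI mx xI).
Qed.

Lemma rowmotion_inj : {in is_ideal alpha &, injective (rowmotion alpha)}.
Proof.
move=> I J hI hJ eIJ; apply/setP => x; apply/negb_inj.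
by rewrite !notin_idealE // -!maxset_rowmotion eIJ.
Qed.

End Rowmotion.

Section Labels.

Context {alpha : seq nat}.

Local Notation n := (fence_n alpha).

Implicit Types (S : {set elt alpha}) (m : elt alpha).

(* [chi alpha l I] and [hatchi alpha l I] are, by conversion, the casts of
   [at_label (maxset_of alpha I) l] and [at_label I l]. *)
Definition at_label S (l : nat) : bool := [exists m : elt alpha, ((m : nat).+1 == l) && (m \in S)].

(* Label [0] stands for a virtual bottom element lying in every ideal, label [n.+1]
   for a virtual top element lying in none. *)
Definition at_padded_label S (l : nat) : bool := (l == 0%N) || at_label S l.

Lemma at_label_elt S m : at_label S m.+1 = (m \in S).
Proof.
apply/existsP/idP => [[w /andP[/eqP ew wS]]|mS]; last by exists m; rewrite eqxx.
by have -> : m = w by apply/val_inj; case: ew.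
Qed.

Lemma at_padded_label_elt S m : at_padded_label S m.+1 = (m \in S).
Proof. exact: at_label_elt. Qed.

Lemma at_label_top S : at_label S n.+1 = false.
Proof. by apply/existsP => -[w /andP[/eqP[ew] _]]; move: (ltn_ord w); rewrite ew ltnn. Qed.

Lemma upper_covers_notin S m : upstep alpha 0 ->
  [forall w, lessdot alpha m w ==> (w \notin S)] =
  (upstep alpha m.+1 ==> ~~ at_padded_label S m.+2) &&
  (upstep alpha m || ~~ at_padded_label S m).
Proof.
move=> up0; apply/forallP/andP => [h|[h1 h2] w]; last first.
  apply/implyP; rewrite lessdotE => /orP[/andP[/eqP e up]|/andP[/eqP e dn]].
    by move/implyP: h1 => /(_ up); rewrite -e at_padded_label_elt.
  by move: h2; rewrite e (negbTE dn) at_padded_label_elt.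
split.
  apply/implyP => up; apply/negP => /existsP[w /andP[/eqP[ew] wS]].
  by have /implyP := h w; rewrite lessdotE ew eqxx up wS => /(_ isT).
case: m h => [[|m] lt_m] h /=; first by rewrite up0.
case: (boolP (upstep alpha m.+1)) => //= dn.
apply/negP => /existsP[w /andP[/eqP[ew] wS]].
by have /implyP := h w; rewrite lessdotE ew eqxx dn orbT wS => /(_ isT).
Qed.

Lemma lower_covers_in S m : upstep alpha n ->
  [forall w, lessdot alpha w m ==> (w \in S)] =
  (upstep alpha m ==> at_padded_label S m) && (upstep alpha m.+1 || at_padded_label S m.+2).
Proof.
move=> upn; apply/forallP/andP => [h|[h1 h2] w]; last first.
  apply/implyP; rewrite lessdotE => /orP[/andP[/eqP e up]|/andP[/eqP e dn]].
    by move/implyP: h1; rewrite e at_padded_label_elt; apply.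
  by move: h2; rewrite (negbTE dn) -e at_padded_label_elt.
split.
  case: m h => [[|m] lt_m] h; first by rewrite /at_padded_label eqxx implybT.
  apply/implyP => up; have lt_m' : (m < n)%N by apply: ltnW.
  rewrite -[m.+1]/((Ordinal lt_m' : nat).+1) at_padded_label_elt.
  by have /implyP := h (Ordinal lt_m'); rewrite lessdotE /= eqxx up; apply.
case: (boolP (upstep alpha m.+1)) => //= dn.
have lt_m : (m.+1 < n)%N.
  by rewrite ltn_neqAle ltn_ord andbT; apply/eqP => e; move: dn; rewrite e upn.
rewrite -[m.+2]/((Ordinal lt_m : nat).+1) at_padded_label_elt.
by have /implyP := h (Ordinal lt_m); rewrite lessdotE /= eqxx dn orbT; apply.
Qed.

End Labels.

Section OrbitSums.

Context {alpha : seq nat}.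

Local Notation n := (fence_n alpha).
Local Notation rho := (rowmotion alpha).
Local Notation orbit := (fingraph.orbit rho).

Hypotheses (up0 : upstep alpha 0) (upn : upstep alpha n).

Lemma local_relations_ideal {J : {set elt alpha}} (m : elt alpha) : is_ideal alpha J ->
  local_relations (upstep alpha m) (upstep alpha m.+1)
    (at_padded_label J m)%:R (at_padded_label J m.+1)%:R (at_padded_label J m.+2)%:R
    (chi alpha m.+1 J) (chi alpha m.+1 (rho J)) (1 : rat).
Proof.
move=> hJ; have chiE S : chi alpha m.+1 S = (m \in maxset_of alpha S)%:R.
  by rewrite -at_label_elt.
rewrite !chiE maxset_rowmotion maxset_ideal // minset_ideal_compl //.
rewrite upper_covers_notin // lower_covers_in // -at_padded_label_elt.
apply: local_relations_bits; rewrite at_padded_label_elt => mJ.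
  rewrite -lower_covers_in //; apply/forallP => w; apply/implyP => wm.
  exact: idealP hJ (lessdot_fle wm) mJ.
rewrite -upper_covers_notin //; apply/forallP => w; apply/implyP => mw.
by apply: contra mJ => wJ; apply: idealP hJ (lessdot_fle mw) wJ.
Qed.

Lemma ideal_in_orbit {I J : {set elt alpha}} :
  is_ideal alpha I -> J \in orbit I -> is_ideal alpha J.
Proof. by move=> hI /trajectP[[|k] _ ->] //=; apply: rowmotion_ideal. Qed.

Lemma fence_relations_orbit {I : {set elt alpha}} : is_ideal alpha I ->
  fence_relations n (upstep alpha)
    (fun l => \sum_(J <- orbit I) (at_padded_label J l)%:R)
    (fun l => \sum_(J <- orbit I) chi alpha l J)
    (size (orbit I))%:R.
Proof.
move=> hI; split.
- by rewrite -sum1_size natr_sum.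
- by rewrite big1 // => J _; rewrite /at_padded_label at_label_top.
move=> m hm.
rewrite -[X in local_relations _ _ _ _ _ _ X _](sum_orbit_shift (chi alpha m.+1)
  (fun J _ => rowmotion_ideal J) (@rowmotion_inj alpha) hI).
rewrite -sum1_size natr_sum; apply: local_relations_sum => J JI.
exact: local_relations_ideal (Ordinal hm) (ideal_in_orbit hI JI).
Qed.

End OrbitSums.

Section Mesic.

Context {alpha : seq nat}.

Local Notation n := (fence_n alpha).
Local Notation orbit := (fingraph.orbit (rowmotion alpha)).

Lemma mesicP (f : {set elt alpha} -> rat) (c : rat) :
  mesic alpha f c <->
  forall I, is_ideal alpha I -> \sum_(J <- orbit I) f J = c * (size (orbit I))%:R.
Proof.
have size_neq0 I : (size (orbit I))%:R != 0 :> rat.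
  by rewrite size_orbit pnatr_eq0 -lt0n order_gt0.
by split=> h I hI; [rewrite -(h I hI) divfK | rewrite h // mulfK].
Qed.

Lemma orbit_sum_chi_shared :
  rev alpha = alpha ->
  (forall i : nat, (1 <= i <= size alpha - 1)%N ->
     mesic alpha (fun I => chi alpha (fa alpha i) I - chi alpha (fa alpha (size alpha - i)) I)
       0) ->
  forall I, is_ideal alpha I ->
  forall j, (j < n)%N -> upstep alpha j != upstep alpha j.+1 ->
  \sum_(J <- orbit I) chi alpha j.+1 J = \sum_(J <- orbit I) chi alpha (n - j) J.
Proof.
move=> alpha_rev shared I hI j lt_jn /(shared_fa alpha j lt_jn)[i hi fa_i].
have fa_mirror : fa alpha (size alpha - i) = (n - j)%N.
  by have := @fa_rev alpha alpha_rev i (ltac:(lia)); rewrite fa_i /fence_n; lia.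
have /mesicP/(_ I hI) := shared i hi.
by rewrite mul0r sumrB fa_i fa_mirror => /eqP; rewrite subr_eq0 => /eqP.
Qed.

End Mesic.

Theorem theorem5p9 (alpha : seq nat) :
  fence_data alpha ->
  (forall i : nat, (i < size alpha)%N ->
     nth 0%N alpha i = nth 0%N alpha (size alpha - 1 - i)) ->
  odd (size alpha) ->
  (forall i : nat, (1 <= i <= size alpha - 1)%N ->
     mesic alpha (fun I => chi alpha (fa alpha i) I - chi alpha (fa alpha (size alpha - i)%N) I) 0) ->
  forall k : nat, (1 <= k <= fence_n alpha)%N ->
    mesic alpha (fun I => chi alpha k I - chi alpha (fence_n alpha - k + 1)%N I) 0 /\
    mesic alpha (fun I => hatchi alpha k I + hatchi alpha (fence_n alpha - k + 1)%N I) 1.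
Proof.
move=> [_ _ head_ge2 _] /rev_palindrome alpha_rev t_odd shared k /andP[k_gt0 k_le].
set n := fence_n alpha; have sumn_gt0 : (0 < sumn alpha)%N.
  by apply: leq_trans (ltnW head_ge2) _; case: (alpha) => //= a s; apply: leq_addr.
have u_mirror := upstep_mirror alpha_rev t_odd sumn_gt0.
have up0 : upstep alpha 0 by apply/upstep0/ltnW.
have upn : upstep alpha n by rewrite -(subn0 n) u_mirror.
have [m -> lt_mn] : exists2 m, k = m.+1 & (m < n)%N by exists k.-1; lia.
rewrite addn1 subnSK //; split; apply/mesicP => I hI.
all: have [Hsym Csym] := fence_relations_symmetric u_mirror
  (fence_relations_orbit up0 upn hI) (orbit_sum_chi_shared alpha_rev shared I hI) m lt_mn.
- by rewrite sumrB Csym subrr mul0r.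
- by rewrite big_split mul1r -Hsym -(subnSK lt_mn).
Qed.
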